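(* Let $V$ be a mixed lattice vector space and $p$ a seminorm on $V$. The following are equivalent: (a) $p$ is a mixed lattice seminorm; (b) $p$ is a mixed-monotone seminorm and $p(s(x))=p(x)$ for all $x\in V$.
   Context: A mixed lattice vector space $(V,\le,\preccurlyeq)$ is a real vector space $V$ with two partial orderings $\le$ (initial order) and $\preccurlyeq$ (specific order), each making $V$ a partially ordered vector space, with positive cones $V_p=\{x:0\le x\}$, $V_{sp}=\{x:0\preccurlyeq x\}$, such that: (1) for all $x,y$ the elements $x\curlyvee y=\min\{w: w\succcurlyeq x,\ w\ge y\}$ and $x\curlywedge y=\max\{w: w\preccurlyeq x,\ w\le y\}$ exist (min/max with respect to $\le$); (2) $x\preccurlyeq y$ implies $x\le y$; (3) $x\curlyvee y, x\curlywedge y\in V_{sp}$ whenever $x,y\in V_{sp}$. Notation: $x^u=0\curlyvee x$, $x^l=0\curlyvee(-x)$, $s(x)=x^u+x^l$. A seminorm $p$ is mixed-monotone if $0\preccurlyeq x\le y$ implies $p(x)\le p(y)$, and is a mixed lattice seminorm if $s(x)\le s(y)$ implies $p(x)\le p(y)$. *)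

From HB Require Import structures.
From mathcomp Require Import all_boot all_order all_algebra.
From mathcomp Require Import reals.
Set Implicit Arguments. Unset Strict Implicit. Unset Printing Implicit Defensive.
Import Order.TTheory GRing.Theory Num.Theory.
Local Open Scope ring_scope.

Definition povs_order (R : realType) (V : lmodType R) (le : V -> V -> Prop) : Prop :=
  [/\ (forall x, le x x),
      (forall x y, le x y -> le y x -> x = y),
      (forall x y z, le x y -> le y z -> le x z),
      (forall x y z, le x y -> le (x + z) (y + z)) &
      (forall (a : R) x y, 0 <= a -> le x y -> le (a *: x) (a *: y))].

(* A mixed lattice vector space structure (V, <=, <<=) on V.
   [ile] = initial order <=, [sle] = specific order <<=.
   [msup x y] = x (curly vee) y = min{w : w >>= x, w >= y} (min w.r.t. <=),
   [minf x y] = x (curly wedge) y = max{w : w <<= x, w <= y} (max w.r.t. <=). *)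
Record mixed_lattice (R : realType) (V : lmodType R) := MixedLattice {
  ile : V -> V -> Prop;
  sle : V -> V -> Prop;
  msup : V -> V -> V;
  minf : V -> V -> V;
  ile_povs : povs_order ile;
  sle_povs : povs_order sle;
  msup_ub : forall x y, sle x (msup x y) /\ ile y (msup x y);
  msup_least : forall x y w, sle x w -> ile y w -> ile (msup x y) w;
  minf_lb : forall x y, sle (minf x y) x /\ ile (minf x y) y;
  minf_greatest : forall x y w, sle w x -> ile w y -> ile w (minf x y);
  sle_ile : forall x y, sle x y -> ile x y;
  msup_minf_spos : forall x y, sle 0 x -> sle 0 y ->
      sle 0 (msup x y) /\ sle 0 (minf x y)
}.

Section Ops.
Variables (R : realType) (V : lmodType R) (L : mixed_lattice V).
Definition upart (x : V) : V := msup L 0 x.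
Definition lpart (x : V) : V := msup L 0 (- x).
Definition sabs (x : V) : V := upart x + lpart x.

Definition seminorm (p : V -> R) : Prop :=
  (forall x y, p (x + y) <= p x + p y) /\ (forall (a : R) x, p (a *: x) = `|a| * p x).

Definition mixed_monotone (p : V -> R) : Prop :=
  forall x y, sle L 0 x -> ile L x y -> p x <= p y.

Definition mixed_lattice_seminorm (p : V -> R) : Prop :=
  forall x y, ile L (sabs x) (sabs y) -> p x <= p y.
End Ops.

From HB Require Import structures.
From mathcomp Require Import all_boot all_order all_algebra.
From mathcomp Require Import reals.
Set Implicit Arguments. Unset Strict Implicit. Unset Printing Implicit Defensive.
Import Order.TTheory GRing.Theory Num.Theory.
Local Open Scope ring_scope.

(* For [x] specifically positive, [x^u = x] and [x^l = 0], so [s(x) = x]; in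
   particular [s] is idempotent.  Since [s(x)] is specifically positive and
   [x <= s(x)], both directions reduce to comparing [s(x)] and [s(y)]. *)

Section MixedLattice.
Variables (R : realType) (V : lmodType R) (L : mixed_lattice V).

Lemma ile_refl x : ile L x x.
Proof. by case: (ile_povs L). Qed.

Lemma ile_anti x y : ile L x y -> ile L y x -> x = y.
Proof. by case: (ile_povs L) => _ h _ _ _; apply: h. Qed.

Lemma ile_trans x y z : ile L x y -> ile L y z -> ile L x z.
Proof. by case: (ile_povs L) => _ _ h _ _; apply: h. Qed.

Lemma ile_add2r z x y : ile L x y -> ile L (x + z) (y + z).
Proof. by case: (ile_povs L) => _ _ _ h _; apply: h. Qed.

Lemma sle_refl x : sle L x x.
Proof. by case: (sle_povs L). Qed.

Lemma sle_trans x y z : sle L x y -> sle L y z -> sle L x z.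
Proof. by case: (sle_povs L) => _ _ h _ _; apply: h. Qed.

Lemma sle_add2r z x y : sle L x y -> sle L (x + z) (y + z).
Proof. by case: (sle_povs L) => _ _ _ h _; apply: h. Qed.

Lemma sle_addr_ge0 x y : sle L 0 x -> sle L 0 y -> sle L 0 (x + y).
Proof.
by move=> x0 y0; apply: sle_trans y0 _; rewrite -{1}[y]add0r; apply: sle_add2r.
Qed.

Lemma sabs_sge0 x : sle L 0 (sabs L x).
Proof. exact: sle_addr_ge0 (msup_ub L 0 x).1 (msup_ub L 0 (- x)).1. Qed.

Lemma ile_sabs x : ile L x (sabs L x).
Proof.
have x_le_xu : ile L x (upart L x) := (msup_ub L 0 x).2.
have xl_ge0 : ile L 0 (lpart L x) := sle_ile (msup_ub L 0 (- x)).1.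
apply: ile_trans x_le_xu _.
by rewrite -{1}[upart L x]add0r [sabs _ _]addrC; apply: ile_add2r.
Qed.

Lemma upart_sge0 x : sle L 0 x -> upart L x = x.
Proof.
move=> x0; apply: ile_anti; last exact: (msup_ub L 0 x).2.
exact: msup_least x0 (ile_refl x).
Qed.

Lemma lpart_sge0 x : sle L 0 x -> lpart L x = 0.
Proof.
move=> x0; apply: ile_anti; last exact: sle_ile (msup_ub L 0 (- x)).1.
apply: msup_least; first exact: sle_refl.
by rewrite -(subrr x) -{1}[- x]add0r; apply: ile_add2r; apply: sle_ile.
Qed.

Lemma sabs_sge0_id x : sle L 0 x -> sabs L x = x.
Proof. by move=> x0; rewrite /sabs upart_sge0 // lpart_sge0 // addr0. Qed.

Lemma sabs_idem x : sabs L (sabs L x) = sabs L x.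
Proof. exact/sabs_sge0_id/sabs_sge0. Qed.

End MixedLattice.

Theorem proposition4p4 (R : realType) (V : lmodType R) (L : mixed_lattice V)
  (p : V -> R) (hp : seminorm p) :
  mixed_lattice_seminorm L p <->
  (mixed_monotone L p /\ forall x : V, p (sabs L x) = p x).
Proof.
split=> [p_mls | [p_mono p_sabs] x y sx_le_sy].
- split=> [x y x0 x_le_y | x].
    apply: p_mls; rewrite sabs_sge0_id //.
    exact: ile_trans x_le_y (ile_sabs L y).
  have [ssx_le_sx sx_le_ssx] : ile L (sabs L (sabs L x)) (sabs L x) /\
                                ile L (sabs L x) (sabs L (sabs L x)).
    by rewrite sabs_idem; split; apply: ile_refl.
  by apply: le_anti; rewrite (p_mls _ _ ssx_le_sx) (p_mls _ _ sx_le_ssx).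
- by rewrite -p_sabs -(p_sabs y); apply: p_mono (sabs_sge0 L x) sx_le_sy.
Qed.
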